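(* Let $\bar{\boldsymbol{\Psi}}_{\mathrm{id}}=\mathrm{diag}(\bar\psi_{\mathrm{id},1},\dots,\bar\psi_{\mathrm{id},N})$ with all entries positive, $\bar\psi_{\mathrm{f},1}>0$, $\mathbf{w}_1\in\mathbb{R}^N\setminus\{\mathbf{0}\}$, $\theta\in[0,1]$, and $\alpha_1,\dots,\alpha_T>0$, $\beta_1,\dots,\beta_T>0$ with $\sum_t\alpha_t=\sum_t\beta_t=1$. For nonzero $\mathbf{x}_0\in\mathbb{R}^N$ let $$\Upsilon(\mathbf{x}_0)=\frac{\sum_{t=1}^T(\alpha_t(1-\theta)+\beta_t\theta)^2\,\mathbf{x}_0^\top\left(\alpha_t\bar{\boldsymbol{\Psi}}_{\mathrm{id}}+\beta_t\bar\psi_{\mathrm{f},1}\mathbf{w}_1\mathbf{w}_1^\top\right)^{-1}\mathbf{x}_0}{\mathbf{x}_0^\top\left(\bar{\boldsymbol{\Psi}}_{\mathrm{id}}+\bar\psi_{\mathrm{f},1}\mathbf{w}_1\mathbf{w}_1^\top\right)^{-1}\mathbf{x}_0},$$ $\gamma_t=\beta_t/\alpha_t$, $\eta_1=\bar\psi_{\mathrm{f},1}\mathbf{w}_1^\top\bar{\boldsymbol{\Psi}}_{\mathrm{id}}^{-1}\mathbf{w}_1$, and $\Delta=\sum_{t=1}^T\frac{\alpha_t(1-\theta(1-\gamma_t))^2(1-\gamma_t)}{1+\eta_1\gamma_t}$. Let $\mathbf{w}_1^\perp\neq\mathbf{0}$ be any vector with $\mathbf{w}_1^\top\bar{\boldsymbol{\Psi}}_{\mathrm{id}}^{-1}\mathbf{w}_1^\perp=0$.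 Then $$\Upsilon_{\mathrm{market}}:=\Upsilon(\mathbf{w}_1)=1+\theta^2\Big(\sum_{t}\frac{\beta_t^2}{\alpha_t}-1\Big)+\eta_1\Delta,\qquad \Upsilon_{\mathrm{orth}}:=\Upsilon(\mathbf{w}_1^\perp)=1+\theta^2\Big(\sum_t\frac{\beta_t^2}{\alpha_t}-1\Big),$$ and $\max_{\mathbf{x}_0\neq\mathbf{0}}\Upsilon(\mathbf{x}_0)$ equals $\Upsilon_{\mathrm{market}}$ if $\Delta\ge0$ and $\Upsilon_{\mathrm{orth}}$ if $\Delta\le0$, while $\min_{\mathbf{x}_0\neq\mathbf{0}}\Upsilon(\mathbf{x}_0)$ equals $\Upsilon_{\mathrm{orth}}$ if $\Delta\ge0$ and $\Upsilon_{\mathrm{market}}$ if $\Delta\le0$. Moreover: for fixed $(\eta_1,\alpha_1,\dots,\alpha_T,\beta_1,\dots,\beta_T)$, regarding $\Delta$ as a function of $\theta$, there exists $\theta^*\in[0,1]$ with $\Delta\ge0$ if $\theta\le\theta^*$ and $\Delta\le0$ if $\theta\ge\theta^*$; and for fixed $(\theta,\alpha_1,\dots,\alpha_T,\beta_1,\dots,\beta_T)$ with $\theta<1$, regarding $\Delta$ as a function of $\eta_1\ge0$, there exists $\eta_1^*\in[\frac{\theta}{1-\theta},\infty]$ with $\Delta\le0$ if $\eta_1\le\eta_1^*$ and $\Delta\ge0$ if $\eta_1\ge\eta_1^*$.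
   Context: $\Upsilon(\mathbf{x}_0)$ is the ratio of the expected cost of the separable schedule $\mathbf{v}_t^{\mathrm{sep}}=(\alpha_t(1-\theta)+\beta_t\theta)\mathbf{x}_0$ to the minimal expected cost of liquidating $\mathbf{x}_0$, under impact matrices $\mathbf{G}_t=\left(\alpha_t\bar{\boldsymbol{\Psi}}_{\mathrm{id}}+\beta_t\bar\psi_{\mathrm{f},1}\mathbf{w}_1\mathbf{w}_1^\top\right)^{-1}$ and cost $\sum_t\tfrac12\mathbf{v}_t^\top\mathbf{G}_t\mathbf{v}_t$. *)

From HB Require Import structures.
From mathcomp Require Import all_boot all_order all_algebra.
From mathcomp Require Import reals.
Set Implicit Arguments. Unset Strict Implicit. Unset Printing Implicit Defensive.
Import Order.TTheory GRing.Theory Num.Theory.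
Local Open Scope ring_scope.

Definition qinv (R : realType) (N : nat) (A : 'M[R]_N) (x : 'cV[R]_N) : R :=
  (x^T *m invmx A *m x) 0 0.

Definition impact (R : realType) (N : nat) (psi : 'rV[R]_N) (psif : R)
  (w : 'cV[R]_N) (a b : R) : 'M[R]_N :=
  a *: diag_mx psi + (b * psif) *: (w *m w^T).

(* Upsilon(x0): ratio of the separable-schedule cost to the minimal cost *)
Definition Upsilon (R : realType) (N T : nat) (psi : 'rV[R]_N) (psif : R)
  (w : 'cV[R]_N) (theta : R) (alpha beta : 'I_T -> R) (x : 'cV[R]_N) : R :=
  (\sum_(t < T) (alpha t * (1 - theta) + beta t * theta) ^+ 2 *
       qinv (impact psi psif w (alpha t) (beta t)) x)
  / qinv (impact psi psif w 1 1) x.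

Definition eta1 (R : realType) (N : nat) (psi : 'rV[R]_N) (psif : R)
  (w : 'cV[R]_N) : R :=
  psif * (w^T *m invmx (diag_mx psi) *m w) 0 0.

Definition gam (R : realType) (T : nat) (alpha beta : 'I_T -> R) (t : 'I_T) : R :=
  beta t / alpha t.

Definition Delta (R : realType) (T : nat) (alpha beta : 'I_T -> R) (eta theta : R) : R :=
  \sum_(t < T) alpha t * (1 - theta * (1 - gam alpha beta t)) ^+ 2
                 * (1 - gam alpha beta t) / (1 + eta * gam alpha beta t).

Definition Ups_orth (R : realType) (T : nat) (alpha beta : 'I_T -> R) (theta : R) : R :=
  1 + theta ^+ 2 * (\sum_(t < T) beta t ^+ 2 / alpha t - 1).

Definition Ups_market (R : realType) (T : nat) (alpha beta : 'I_T -> R)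
  (eta theta : R) : R :=
  Ups_orth alpha beta theta + eta * Delta alpha beta eta theta.

Definition is_max_nz (R : realType) (N : nat) (f : 'cV[R]_N -> R) (v : R) : Prop :=
  (forall x, x != 0 -> f x <= v) /\ exists2 x, x != 0 & f x = v.
Definition is_min_nz (R : realType) (N : nat) (f : 'cV[R]_N -> R) (v : R) : Prop :=
  (forall x, x != 0 -> v <= f x) /\ exists2 x, x != 0 & f x = v.

From HB Require Import structures.
From mathcomp Require Import all_boot all_order all_algebra.
From mathcomp Require Import boolp classical_sets reals.
From mathcomp Require Import ring lra.
Set Implicit Arguments. Unset Strict Implicit. Unset Printing Implicit Defensive.
Import Order.TTheory GRing.Theory Num.Theory.
Local Open Scope ring_scope.

(* Sherman-Morrison writes each impact matrix as a rank-one perturbation of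
   [Psi_id], and then, with [q = x^T Psi_id^-1 x] and
   [S = psif (w^T Psi_id^-1 x)^2], the cost ratio collapses to
   [Upsilon x = Ups_orth + g x * Delta], where [g x = S / ((1 + eta1) q - S)]
   is [market_exposure].  Cauchy-Schwarz for the [Psi_id^-1] inner product
   gives [0 <= g x <= eta1], with [g w = eta1] and [g = 0] on the
   [Psi_id^-1]-orthogonal complement of [w], which is nonzero because
   [N >= 2]; this yields the extrema.
   In [theta], [Delta] is a quadratic with [Delta 0 >= 0 >= Delta 1] that
   stays nonpositive once it is negative; in [eta], [(1 + eta) Delta] is
   nondecreasing and nonpositive at [eta = theta / (1 - theta)].  In both cases
   the threshold is the supremum of the points up to which the function keeps
   its initial sign, Lipschitz continuity settling the sign at that point. *)

Definition mxform (R : nzRingType) (n : nat) (A : 'M[R]_n) (x y : 'cV[R]_n) : R :=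
  (x^T *m A *m y) 0 0.

Lemma mxformC (R : comNzRingType) (n : nat) (A : 'M[R]_n) (x y : 'cV[R]_n) :
  A^T = A -> mxform A x y = mxform A y x.
Proof.
move=> symA; rewrite /mxform -{1}symA -[x^T *m A^T *m y]trmxK [LHS]mxE.
by rewrite !trmx_mul !trmxK mulmxA.
Qed.

Lemma mxformZ (R : comNzRingType) (n : nat) (c : R) (A : 'M[R]_n) (x y : 'cV[R]_n) :
  mxform (c *: A) x y = c * mxform A x y.
Proof. by rewrite /mxform -scalemxAr -scalemxAl mxE. Qed.

Lemma mxformZr (R : comNzRingType) (n : nat) (c : R) (A : 'M[R]_n) (x y : 'cV[R]_n) :
  mxform A x (c *: y) = c * mxform A x y.
Proof. by rewrite /mxform -scalemxAr mxE. Qed.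

Lemma mxform_diag (R : comNzRingType) (n : nat) (d : 'rV[R]_n) (x y : 'cV[R]_n) :
  mxform (diag_mx d) x y = \sum_i d 0 i * (x i 0 * y i 0).
Proof.
rewrite /mxform mul_mx_diag mxE; apply: eq_bigr => i _; rewrite !mxE; ring.
Qed.

Lemma mulmx1_invmx (R : comUnitRingType) (n : nat) (A B : 'M[R]_n) :
  A *m B = 1%:M -> invmx A = B.
Proof.
move=> AB; have [uA _] := mulmx1_unit AB.
by rewrite -[invmx A]mulmx1 -AB mulmxA mulVmx // mul1mx.
Qed.

Lemma invmx_diag (F : fieldType) (n : nat) (d : 'rV[F]_n) :
  (forall i, d 0 i != 0) -> invmx (diag_mx d) = diag_mx (map_mx GRing.inv d).
Proof.
move=> d_neq0; apply: mulmx1_invmx; rewrite mulmx_diag -diag_const_mx.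
by congr diag_mx; apply/rowP => j; rewrite !mxE divff.
Qed.

Lemma invmx_rank_one_update (F : fieldType) (n : nat) (A : 'M[F]_n) (u v : 'cV[F]_n) :
  A \in unitmx -> 1 + mxform (invmx A) v u != 0 ->
  invmx (A + u *m v^T) = invmx A -
    (1 + mxform (invmx A) v u)^-1 *: (invmx A *m u *m (v^T *m invmx A)).
Proof.
set B := invmx A; set s := mxform B v u; set k := (1 + s)^-1 => uA s1.
apply: mulmx1_invmx; set Z := u *m (v^T *m B).
have vBu : v^T *m B *m u = s%:M by rewrite [LHS]mx11_scalar.
have AZ : A *m (B *m u *m (v^T *m B)) = Z by rewrite !mulmxA mulmxV // mul1mx -mulmxA.
have uvZ : u *m v^T *m (B *m u *m (v^T *m B)) = s *: Z.
  by rewrite -!mulmxA (mulmxA v^T) (mulmxA (v^T *m B)) vBu mul_scalar_mx -scalemxAr.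
have Zk : Z - k *: (s *: Z) = k *: Z.
  by rewrite scalerA -{1}[Z]scale1r -scalerBl /k; congr (_ *: _); field.
by rewrite mulmxDl !mulmxBr -!scalemxAr AZ mulmxV // uvZ -mulmxA -/Z Zk subrK.
Qed.

Lemma mxform_invmx_rank_one_update (F : fieldType) (n : nat) (A : 'M[F]_n)
    (u v x y : 'cV[F]_n) :
  A \in unitmx -> 1 + mxform (invmx A) v u != 0 ->
  mxform (invmx (A + u *m v^T)) x y = mxform (invmx A) x y -
    mxform (invmx A) x u * mxform (invmx A) v y / (1 + mxform (invmx A) v u).
Proof.
move=> unitA s_neq0; rewrite invmx_rank_one_update //.
have mx11B (B C : 'M[F]_1) : (B - C) 0 0 = B 0 0 - C 0 0 by rewrite !mxE.
have mx11Z c (B : 'M[F]_1) : (c *: B) 0 0 = c * B 0 0 by rewrite mxE.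
have mx11M (B C : 'M[F]_1) : (B *m C) 0 0 = B 0 0 * C 0 0 by rewrite mxE big_ord1.
rewrite /mxform mulmxBr mulmxBl mx11B -scalemxAr -scalemxAl mx11Z.
rewrite !mulmxA -(mulmxA (_ *m u *m v^T)) -(mulmxA (_ *m u)) mx11M mulmxA; ring.
Qed.

Section PositiveDiagonalForm.
Variables (R : realFieldType) (n : nat) (d : 'rV[R]_n).
Hypothesis d_gt0 : forall i, 0 < d 0 i.

Lemma mxform_diag_ge0 x : 0 <= mxform (diag_mx d) x x.
Proof.
rewrite mxform_diag; apply: sumr_ge0 => i _.
by rewrite -expr2 (mulr_ge0 (ltW (d_gt0 i)) (sqr_ge0 _)).
Qed.

Lemma mxform_diag_gt0 x : x != 0 -> 0 < mxform (diag_mx d) x x.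
Proof.
move=> x_neq0; have [i xi_neq0] : exists i, x i 0 != 0.
  apply/existsP; apply: contraNT x_neq0 => /existsPn x_eq0.
  by apply/eqP/matrixP => i j; rewrite (ord1 j) mxE; apply/eqP/negPn/x_eq0.
rewrite mxform_diag (bigD1 i) //= ltr_pwDl //.
  by rewrite -expr2 mulr_gt0 // lt_def sqr_ge0 andbT sqrf_eq0.
by apply: sumr_ge0 => j _; rewrite -expr2 (mulr_ge0 (ltW (d_gt0 j)) (sqr_ge0 _)).
Qed.

Lemma mxform_diag_cauchy_schwarz x y :
  mxform (diag_mx d) x y ^+ 2 <= mxform (diag_mx d) x x * mxform (diag_mx d) y y.
Proof.
have [-> | y_neq0] := eqVneq y 0.
  by rewrite /mxform !mulmx0 !mxE expr0n mulr0.
set f := mxform (diag_mx d).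
have expand a b : f (a *: x - b *: y) (a *: x - b *: y) =
    a ^+ 2 * f x x - 2 * a * b * f x y + b ^+ 2 * f y y.
  rewrite /f !mxform_diag !mulr_sumr -sumrB -big_split /=.
  by apply: eq_bigr => i _; rewrite !mxE; ring.
have := mxform_diag_ge0 (f y y *: x - f x y *: y); rewrite -/f expand.
by have := mxform_diag_gt0 y_neq0; rewrite -/f; nra.
Qed.

End PositiveDiagonalForm.


Lemma nonzero_cV_in_kernel (F : fieldType) (n : nat) (u : 'rV[F]_n) :
  (1 < n)%N -> exists2 v : 'cV[F]_n, v != 0 & u *m v = 0.
Proof.
move=> n_gt1; have /rowV0Pn [r /sub_kermxP ru r_neq0] : kermx u^T != 0.
  by rewrite -mxrank_eq0 mxrank_ker subn_eq0 -ltnNge (leq_ltn_trans (rank_leq_col _)).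
by exists r^T; rewrite ?trmx_eq0 // -[u]trmxK -trmx_mul ru trmx0.
Qed.

Lemma lt_scaled_exists (R : realFieldType) (K m : R) :
  0 <= K -> 0 < m -> exists2 delta, 0 < delta & K * delta < m.
Proof.
move=> K_ge0 m_gt0; exists (m / (K + 1)); first by rewrite divr_gt0 // ltr_wpDl.
by rewrite mulrA ltr_pdivrMr ?ltr_wpDl //; lra.
Qed.

Lemma nonneg_prefix_sup (R : realType) (f : R -> R) (a b : R) :
  a <= b -> 0 <= f a ->
  exists c, [/\ (a <= c <= b),
    (forall y, a <= y -> y < c -> 0 <= f y) &
    (forall x, c < x -> x <= b -> exists2 y, a <= y <= x & f y < 0)].
Proof.
move=> a_le_b fa_ge0.
pose E := [set x : R | (a <= x <= b) /\ forall y, a <= y <= x -> 0 <= f y]%classic.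
have Ea : E a by split=> [|y /le_anti <-]; rewrite ?lexx ?a_le_b.
have supE : has_sup E by split; [exists a | exists b => x [/andP[]]].
have a_le_sup : a <= sup E := sup_upper_bound supE Ea.
exists (sup E); split=> [|y ay y_lt_sup | x sup_lt_x xb].
- by rewrite a_le_sup ge_sup //; [exists a | move=> x [/andP[]]].
- have gap : 0 < sup E - y by rewrite subr_gt0.
  have [e [_ fE] ye] := sup_adherent gap supE.
  by apply: fE; rewrite ay /=; lra.
- apply: contrapT => no_neg.
  suff /(sup_upper_bound supE) : E x by rewrite leNgt sup_lt_x.
  split=> [|y /andP[ay yx]]; first by rewrite xb (le_trans a_le_sup (ltW sup_lt_x)).
  by have [fy_lt0|//] := ltrP (f y) 0; case: no_neg; exists y; rewrite ?ay.
Qed.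

Lemma sign_threshold (R : realType) (f : R -> R) (a b K : R) :
  a <= b -> 0 <= K -> 0 <= f a -> f b <= 0 ->
  (forall x y, a <= x -> x <= y -> y <= b -> `|f y - f x| <= K * (y - x)) ->
  (forall x y, a <= x -> x <= y -> y <= b -> f x < 0 -> f y <= 0) ->
  exists2 c, a <= c <= b &
    forall x, a <= x <= b -> (x <= c -> 0 <= f x) /\ (c <= x -> f x <= 0).
Proof.
move=> a_le_b K_ge0 fa_ge0 fb_le0 f_lip f_single_crossing.
have lip x y : a <= x -> x <= y -> y <= b -> f x - K * (y - x) <= f y <= f x + K * (y - x).
  move=> ax xy yb; have := f_lip _ _ ax xy yb.
  by rewrite ler_norml => /andP[? ?]; apply/andP; split; lra.
have [c [/andP[ac cb] below above]] := nonneg_prefix_sup a_le_b fa_ge0.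
have fc_ge0 : 0 <= f c.
  have [fc_lt0|//] := ltrP (f c) 0.
  have a_lt_c : a < c.
    by rewrite lt_neqAle ac andbT; apply/eqP => ac_eq; rewrite -ac_eq in fc_lt0; lra.
  have [delta delta_gt0 Kdelta] : exists2 delta, 0 < delta & K * delta < - f c.
    by apply: lt_scaled_exists; lra.
  pose y := Num.max a (c - delta).
  have yc : y < c by rewrite gt_max a_lt_c /=; lra.
  have ay : a <= y by rewrite le_max lexx.
  have cdy : c - delta <= y by rewrite le_max lexx orbT.
  have /andP[+ _] := lip y c ay (ltW yc) cb.
  have := below y ay yc.
  have : K * (c - y) <= K * delta by apply: ler_wpM2l => //; lra.
  lra.
have fc_le0 : f c <= 0.
  have [//|fc_gt0] := lerP (f c) 0.
  have c_lt_b : c < b.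
    by rewrite lt_neqAle cb andbT; apply/eqP => cb_eq; rewrite cb_eq in fc_gt0; lra.
  have [delta delta_gt0 Kdelta] := lt_scaled_exists K_ge0 fc_gt0.
  pose x := Num.min b (c + delta).
  have cx : c < x by rewrite lt_min c_lt_b /=; lra.
  have xb : x <= b by rewrite ge_min lexx.
  have xcd : x <= c + delta by rewrite ge_min lexx orbT.
  have [y /andP[ay yx] fy_lt0] := above x cx xb.
  have [yc|cy] := ltP y c; first by have := below y ay yc; lra.
  have /andP[+ _] := lip c y ac cy (le_trans yx xb).
  have : K * (y - c) <= K * delta by apply: ler_wpM2l => //; lra.
  lra.
exists c => [|x /andP[ax xb]]; first by rewrite ac cb.
split=> [xc | cx].
  by have [/(below x ax)|c_lt_x|x_eq_c] := ltgtP x c; [| lra | rewrite x_eq_c].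
have [x_lt_c|c_lt_x|x_eq_c] := ltgtP x c; [lra | | by rewrite x_eq_c].
have [y /andP[ay yx] fy_lt0] := above x c_lt_x xb.
exact: f_single_crossing ay yx xb fy_lt0.
Qed.

Section QuadraticSign.
Variables (R : realType) (p : R -> R) (a0 a1 a2 : R).
Hypothesis pE : forall t, p t = a0 + a1 * t + a2 * t ^+ 2.

Lemma quadratic_single_crossing : 0 <= p 0 -> p 1 <= 0 ->
  forall x y, 0 <= x -> x <= y -> y <= 1 -> p x < 0 -> p y <= 0.
Proof.
move=> p0 p1 x y x_ge0 xy y_le1 px_lt0; have [a2_le0|a2_gt0] := lerP a2 0.
- have chord : y * p x = (y - x) * p 0 + x * p y - a2 * x * (y - x) * y.
    by rewrite !pE; ring.
  have : 0 <= - a2 * x * (y - x) * y by rewrite !mulr_ge0 ?subr_ge0 //; lra.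
  have : 0 <= (y - x) * p 0 by rewrite mulr_ge0 ?subr_ge0.
  have [x_eq0|x_neq0] := eqVneq x 0; first by rewrite x_eq0 in px_lt0; lra.
  have : 0 < x by rewrite lt_def x_neq0 x_ge0.
  nra.
- have chord : (1 - x) * p y =
      (1 - y) * p x + (y - x) * p 1 - a2 * (y - x) * (1 - y) * (1 - x).
    by rewrite !pE; ring.
  have : 0 <= a2 * (y - x) * (1 - y) * (1 - x) by rewrite !mulr_ge0 ?subr_ge0 //; lra.
  have : (1 - y) * p x <= 0 by rewrite mulr_ge0_le0 ?subr_ge0 // ltW.
  have : (y - x) * p 1 <= 0 by rewrite mulr_ge0_le0 ?subr_ge0.
  have [y_eq1|y_neq1] := eqVneq y 1; first by rewrite y_eq1.
  have : 0 < 1 - x by rewrite subr_gt0 (le_lt_trans xy) // lt_neqAle y_neq1 y_le1.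
  nra.
Qed.

Lemma quadratic_lipschitz x y : 0 <= x -> x <= y -> y <= 1 ->
  `|p y - p x| <= (`|a1| + 2 * `|a2|) * (y - x).
Proof.
move=> x_ge0 xy y_le1.
have -> : p y - p x = (y - x) * (a1 + a2 * (x + y)) by rewrite !pE; ring.
rewrite normrM ger0_norm ?subr_ge0 // mulrC ler_wpM2r ?subr_ge0 //.
rewrite (le_trans (ler_normD _ _)) // lerD2l normrM (@ger0_norm _ (x + y)); last lra.
by rewrite mulrC ler_wpM2r //; lra.
Qed.

Lemma quadratic_sign_threshold : 0 <= p 0 -> p 1 <= 0 ->
  exists2 c, 0 <= c <= 1 &
    forall t, 0 <= t <= 1 -> (t <= c -> 0 <= p t) /\ (c <= t -> p t <= 0).
Proof.
move=> p0 p1; apply: (@sign_threshold _ _ _ _ (`|a1| + 2 * `|a2|)) => //.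
- by rewrite addr_ge0 // mulr_ge0.
- exact: quadratic_lipschitz.
- exact: quadratic_single_crossing p0 p1.
Qed.

End QuadraticSign.

Section DeltaSign.
Variables (R : realType) (T : nat) (alpha beta : 'I_T -> R).
Local Notation g := (gam alpha beta).

Lemma Delta_quadratic eta : exists a0 a1 a2 : R,
  forall th, Delta alpha beta eta th = a0 + a1 * th + a2 * th ^+ 2.
Proof.
pose k t := alpha t * (1 - g t) / (1 + eta * g t).
exists (\sum_t k t), (\sum_t - 2 * k t * (1 - g t)), (\sum_t k t * (1 - g t) ^+ 2) => th.
by rewrite !mulr_suml -!big_split /=; apply: eq_bigr => t _; rewrite /k; ring.
Qed.

Hypotheses (alpha_gt0 : forall t, 0 < alpha t) (beta_gt0 : forall t, 0 < beta t).
Hypotheses (alpha_sum1 : \sum_(t < T) alpha t = 1) (beta_sum1 : \sum_(t < T) beta t = 1).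

Lemma gam_gt0 t : 0 < g t.
Proof. exact: divr_gt0. Qed.

Lemma Ups_orthE theta :
  \sum_(t < T) alpha t * (1 - theta * (1 - g t)) ^+ 2 = Ups_orth alpha beta theta.
Proof.
transitivity (\sum_(t < T) ((1 - theta) ^+ 2 * alpha t + 2 * theta * (1 - theta) * beta t
                           + theta ^+ 2 * (beta t ^+ 2 / alpha t))).
  by apply: eq_bigr => t _; rewrite /gam; field; rewrite gt_eqF.
by rewrite !big_split /= -!mulr_sumr alpha_sum1 beta_sum1 /Ups_orth; ring.
Qed.

Lemma separable_cost_ratio theta eta q S : 0 <= eta -> S < (1 + eta) * q ->
  (\sum_(t < T) (alpha t * (1 - theta) + beta t * theta) ^+ 2 *
     ((q - beta t * S / (alpha t + beta t * eta)) / alpha t)) / (q - S / (1 + eta))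
  = Ups_orth alpha beta theta + S / ((1 + eta) * q - S) * Delta alpha beta eta theta.
Proof.
move=> eta_ge0 S_lt.
pose c t := alpha t * (1 - theta * (1 - g t)) ^+ 2.
pose B := \sum_(t < T) c t * g t / (1 + eta * g t).
have den t : 0 < 1 + eta * g t by have := mulr_ge0 eta_ge0 (ltW (gam_gt0 t)); lra.
have num : \sum_(t < T) (alpha t * (1 - theta) + beta t * theta) ^+ 2 *
     ((q - beta t * S / (alpha t + beta t * eta)) / alpha t) = (\sum_(t < T) c t) * q - B * S.
  rewrite !mulr_suml -sumrB; apply: eq_bigr => t _.
  have := den t; have := alpha_gt0 t; rewrite /c /gam => a_gt0 den_t.
  have : 0 < alpha t + eta * beta t by rewrite ltr_pwDl ?mulr_ge0 // ltW.
  by move=> ab_gt0; field; rewrite !gt_eqF.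
have DeltaE : Delta alpha beta eta theta = \sum_(t < T) c t - (1 + eta) * B.
  rewrite /Delta /B mulr_sumr -sumrB; apply: eq_bigr => t _.
  by rewrite /c; field; rewrite gt_eqF.
rewrite num DeltaE Ups_orthE; field.
by rewrite !gt_eqF ?subr_gt0 //; lra.
Qed.

Lemma Delta_centered eta theta :
  Delta alpha beta eta theta = \sum_(t < T) alpha t * (1 - g t) *
    ((1 - theta * (1 - g t)) ^+ 2 / (1 + eta * g t) - (1 + eta)^-1).
Proof.
have balanced : \sum_(t < T) alpha t * (1 - g t) = 0.
  rewrite (eq_bigr (fun t => alpha t - beta t)) ?sumrB ?alpha_sum1 ?beta_sum1 ?subrr // => t _.
  by rewrite /gam mulrBr mulr1 mulrCA divff ?mulr1 // gt_eqF.
rewrite /Delta; under [RHS]eq_bigr do rewrite mulrBr.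
by rewrite sumrB -mulr_suml balanced mul0r subr0; apply: eq_bigr => t _; ring.
Qed.

Lemma Delta_theta0_ge0 eta : 0 <= eta -> 0 <= Delta alpha beta eta 0.
Proof.
move=> eta_ge0; rewrite Delta_centered; apply: sumr_ge0 => t _.
have a_gt0 := alpha_gt0 t; have g_gt0 := gam_gt0 t.
have den : 0 < 1 + eta * g t by have := mulr_ge0 eta_ge0 (ltW g_gt0); lra.
have -> : alpha t * (1 - g t) * ((1 - 0 * (1 - g t)) ^+ 2 / (1 + eta * g t) - (1 + eta)^-1)
    = alpha t * eta * (1 - g t) ^+ 2 / ((1 + eta * g t) * (1 + eta)).
  by field; rewrite !gt_eqF //; lra.
apply: divr_ge0; last by rewrite mulr_ge0 ?(ltW den) //; lra.
by rewrite mulr_ge0 ?sqr_ge0 // mulr_ge0 // ltW.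
Qed.

Lemma Delta_theta1_le0 eta : 0 <= eta -> Delta alpha beta eta 1 <= 0.
Proof.
move=> eta_ge0; rewrite Delta_centered; apply: sumr_le0 => t _.
have a_gt0 := alpha_gt0 t; have g_gt0 := gam_gt0 t.
have den : 0 < 1 + eta * g t by have := mulr_ge0 eta_ge0 (ltW g_gt0); lra.
have -> : alpha t * (1 - g t) * ((1 - 1 * (1 - g t)) ^+ 2 / (1 + eta * g t) - (1 + eta)^-1)
    = - (alpha t * (1 - g t) ^+ 2 * (1 + g t + eta * g t) / ((1 + eta * g t) * (1 + eta))).
  by field; rewrite !gt_eqF //; lra.
rewrite oppr_le0; apply: divr_ge0; last by rewrite mulr_ge0 ?(ltW den) //; lra.
apply: mulr_ge0; last lra.
by rewrite mulr_ge0 ?sqr_ge0 // ltW.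
Qed.

Lemma Delta_odds_le0 theta : 0 <= theta -> theta < 1 ->
  Delta alpha beta (theta / (1 - theta)) theta <= 0.
Proof.
move=> theta_ge0 theta_lt1; rewrite Delta_centered; apply: sumr_le0 => t _.
have a_gt0 := alpha_gt0 t; have g_gt0 := gam_gt0 t.
have den : 0 < 1 - theta + theta * g t.
  by have := mulr_ge0 theta_ge0 (ltW g_gt0); lra.
have -> : alpha t * (1 - g t) * ((1 - theta * (1 - g t)) ^+ 2 /
      (1 + theta / (1 - theta) * g t) - (1 + theta / (1 - theta))^-1)
    = - (theta * (1 - theta) * alpha t * (1 - g t) ^+ 2).
  by field; rewrite !gt_eqF //; lra.
by rewrite oppr_le0 mulr_ge0 ?sqr_ge0 // !mulr_ge0 ?(ltW a_gt0) //; lra.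
Qed.

Lemma Delta_scaled_increment theta : exists2 K, 0 <= K &
  forall u v, 0 <= v -> v <= u ->
    0 <= (1 + u) * Delta alpha beta u theta - (1 + v) * Delta alpha beta v theta
      <= K * (u - v).
Proof.
pose c t := alpha t * (1 - theta * (1 - g t)) ^+ 2 * (1 - g t) ^+ 2.
have c_ge0 t : 0 <= c t by rewrite mulr_ge0 ?sqr_ge0 // mulr_ge0 ?sqr_ge0 // ltW.
exists (\sum_(t < T) c t); first exact: sumr_ge0.
move=> u v v_ge0 vu; have u_ge0 := le_trans v_ge0 vu.
have den_ge1 e t : 0 <= e -> 1 <= 1 + e * g t.
  by move=> e_ge0; have := mulr_ge0 e_ge0 (ltW (gam_gt0 t)); lra.
pose d t := (1 + u * g t) * (1 + v * g t).
have d_ge1 t : 1 <= d t by rewrite mulr_ege1 ?den_ge1.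
have -> : (1 + u) * Delta alpha beta u theta - (1 + v) * Delta alpha beta v theta
    = (u - v) * \sum_(t < T) c t / d t.
  rewrite /Delta !mulr_sumr -sumrB; apply: eq_bigr => t _.
  have := den_ge1 u t u_ge0; have := den_ge1 v t v_ge0 => dv du.
  by rewrite /c /d; field; rewrite !gt_eqF //; lra.
have d_gt0 t : 0 < d t by apply: lt_le_trans (d_ge1 t).
apply/andP; split.
  rewrite mulr_ge0 ?subr_ge0 //; apply: sumr_ge0 => t _.
  by rewrite divr_ge0 ?c_ge0 ?ltW.
rewrite mulrC ler_wpM2r ?subr_ge0 //; apply: ler_sum => t _.
by rewrite ler_pdivrMr // ler_peMr.
Qed.

Lemma Delta_theta_threshold eta : 0 <= eta ->
  exists2 ths, 0 <= ths <= 1 &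
    forall th, 0 <= th <= 1 ->
      (th <= ths -> 0 <= Delta alpha beta eta th) /\
      (ths <= th -> Delta alpha beta eta th <= 0).
Proof.
move=> eta_ge0; have [a0 [a1 [a2 DeltaE]]] := Delta_quadratic eta.
exact: quadratic_sign_threshold DeltaE (Delta_theta0_ge0 eta_ge0) (Delta_theta1_le0 eta_ge0).
Qed.

Lemma Delta_eta_threshold theta : 0 <= theta -> theta < 1 ->
  (exists2 es, theta / (1 - theta) <= es &
     forall e, 0 <= e ->
       (e <= es -> Delta alpha beta e theta <= 0) /\
       (es <= e -> 0 <= Delta alpha beta e theta))
  \/ (forall e, 0 <= e -> Delta alpha beta e theta <= 0).
Proof.
move=> theta_ge0 theta_lt1.
have [[e1 [e1_ge0 De1_gt0]] | never_pos] :=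
  pselect (exists e, 0 <= e /\ 0 < Delta alpha beta e theta); last first.
  right=> e e_ge0; have [//|De_gt0] := lerP (Delta alpha beta e theta) 0.
  by case: never_pos; exists e.
left; pose G e := (1 + e) * Delta alpha beta e theta.
have [K K_ge0 Delta_incr] := Delta_scaled_increment theta.
have G_incr u v : 0 <= v -> v <= u -> G v <= G u /\ G u - G v <= K * (u - v).
  by move=> v_ge0 vu; have /andP[? ?] := Delta_incr u v v_ge0 vu; split; rewrite /G; lra.
have G_sign e : 0 <= e ->
    ((0 <= G e) = (0 <= Delta alpha beta e theta)) /\
    ((G e <= 0) = (Delta alpha beta e theta <= 0)).
  by move=> e_ge0; rewrite /G pmulr_rge0 ?pmulr_rle0 //; lra.
set e0 := theta / (1 - theta).
have e0_ge0 : 0 <= e0 by rewrite divr_ge0 // subr_ge0 ltW.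
have Ge0_le0 : G e0 <= 0 by rewrite (G_sign e0 e0_ge0).2 Delta_odds_le0.
have Ge1_gt0 : 0 < G e1 by rewrite /G mulr_gt0 //; lra.
have e0_le_e1 : e0 <= e1.
  by have [//|e1_lt_e0] := lerP e0 e1; have [] := G_incr e0 e1 e1_ge0 (ltW e1_lt_e0); lra.
have [c /andP[e0c ce1] c_thr] : exists2 c, e0 <= c <= e1 &
    forall e, e0 <= e <= e1 -> (e <= c -> 0 <= - G e) /\ (c <= e -> - G e <= 0).
  apply: sign_threshold e0_le_e1 K_ge0 _ _ _ _.
  - by rewrite oppr_ge0.
  - by rewrite oppr_le0 ltW.
  - move=> x y e0x xy _; have [? ?] := G_incr y x (le_trans e0_ge0 e0x) xy.
    by rewrite ler_norml; apply/andP; split; lra.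
  - by move=> x y e0x xy _; have [] := G_incr y x (le_trans e0_ge0 e0x) xy; lra.
exists c => // e e_ge0; split=> [ec | ce].
  rewrite -(G_sign e e_ge0).2; have [e0e|e_lt_e0] := lerP e0 e.
    have /c_thr[/(_ ec) + _] : e0 <= e <= e1 by rewrite e0e (le_trans ec ce1).
    lra.
  by have [] := G_incr e0 e e_ge0 (ltW e_lt_e0); lra.
rewrite -(G_sign e e_ge0).1; have [e_le_e1|e1_lt_e] := lerP e e1.
  have /c_thr[_ /(_ ce)] : e0 <= e <= e1 by rewrite e_le_e1 (le_trans e0c ce).
  lra.
by have [] := G_incr e e1 e1_ge0 (ltW e1_lt_e); lra.
Qed.

End DeltaSign.

Definition market_exposure (R : realType) (N : nat) (psi : 'rV[R]_N) (psif : R)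
    (w x : 'cV[R]_N) : R :=
  psif * mxform (invmx (diag_mx psi)) w x ^+ 2 /
  ((1 + eta1 psi psif w) * mxform (invmx (diag_mx psi)) x x
   - psif * mxform (invmx (diag_mx psi)) w x ^+ 2).

Section ImpactQuadraticForm.
Variables (R : realType) (N : nat) (psi : 'rV[R]_N) (psif : R) (w : 'cV[R]_N).
Hypotheses (psi_gt0 : forall i, 0 < psi 0 i) (psif_ge0 : 0 <= psif).
Local Notation P := (invmx (diag_mx psi)).

Let inv_psi_gt0 i : 0 < map_mx GRing.inv psi 0 i.
Proof. by rewrite mxE invr_gt0. Qed.

Lemma invmx_diag_psi : P = diag_mx (map_mx GRing.inv psi).
Proof. by apply: invmx_diag => i; rewrite gt_eqF. Qed.

Lemma mxform_invdiag_sym x y : mxform P x y = mxform P y x.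
Proof. by apply: mxformC; rewrite invmx_diag_psi tr_diag_mx. Qed.

Lemma mxform_invdiag_ge0 x : 0 <= mxform P x x.
Proof. by rewrite invmx_diag_psi mxform_diag_ge0. Qed.

Lemma mxform_invdiag_gt0 x : x != 0 -> 0 < mxform P x x.
Proof. by rewrite invmx_diag_psi; apply: mxform_diag_gt0. Qed.

Lemma mxform_invdiag_cauchy_schwarz x : mxform P w x ^+ 2 <= mxform P w w * mxform P x x.
Proof. by rewrite invmx_diag_psi mxform_diag_cauchy_schwarz. Qed.

Lemma eta1E : eta1 psi psif w = psif * mxform P w w.
Proof. by []. Qed.

Lemma eta1_ge0 : 0 <= eta1 psi psif w.
Proof. by rewrite eta1E mulr_ge0 // mxform_invdiag_ge0. Qed.

Lemma qinv_impact x a b : 0 < a -> 0 <= b ->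
  qinv (impact psi psif w a b) x =
  (mxform P x x - b * (psif * mxform P w x ^+ 2) / (a + b * eta1 psi psif w)) / a.
Proof.
move=> a_gt0 b_ge0.
have unit_psi : diag_mx psi \in unitmx.
  by rewrite unitmxE det_diag unitfE; apply/prodf_neq0 => i _; rewrite gt_eqF.
have unitA : a *: diag_mx psi \in unitmx by rewrite unitmxZ // unitfE gt_eqF.
have c_ge0 : 0 <= b * psif * mxform P w w by rewrite !mulr_ge0 // mxform_invdiag_ge0.
have -> : qinv (impact psi psif w a b) x =
    mxform (invmx (a *: diag_mx psi + ((b * psif) *: w) *m w^T)) x x.
  by rewrite /qinv /impact scalemxAl.
rewrite mxform_invmx_rank_one_update // invmxZ //; last first.
  by rewrite mxformZ mxformZr gt_eqF // ltr_pwDl // mulr_ge0 // ltW // invr_gt0.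
rewrite !mxformZ !mxformZr mxform_invdiag_sym eta1E.
by field; rewrite !gt_eqF //; lra.
Qed.

Lemma market_term_le x :
  psif * mxform P w x ^+ 2 <= eta1 psi psif w * mxform P x x.
Proof. by rewrite eta1E -mulrA ler_wpM2l // mxform_invdiag_cauchy_schwarz. Qed.

Lemma market_term_lt x : x != 0 ->
  psif * mxform P w x ^+ 2 < (1 + eta1 psi psif w) * mxform P x x.
Proof. by move=> x_neq0; have := market_term_le x; have := mxform_invdiag_gt0 x_neq0; lra. Qed.

Lemma market_exposure_bounds x : x != 0 ->
  0 <= market_exposure psi psif w x <= eta1 psi psif w.
Proof.
move=> x_neq0; have := market_term_lt x_neq0; rewrite -subr_gt0 => den_gt0.
rewrite /market_exposure; apply/andP; split.
  by rewrite divr_ge0 ?(ltW den_gt0) // mulr_ge0 // sqr_ge0.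
by rewrite ler_pdivrMr //; have := market_term_le x; have := eta1_ge0; nra.
Qed.

Lemma market_exposure_self : w != 0 -> market_exposure psi psif w w = eta1 psi psif w.
Proof.
move=> w_neq0; rewrite /market_exposure eta1E.
have e_neq0 := lt0r_neq0 (mxform_invdiag_gt0 w_neq0); set e := mxform P w w.
have -> : (1 + psif * e) * e - psif * e ^+ 2 = e by ring.
by rewrite expr2 mulrA mulfK.
Qed.

Lemma market_exposure_orth x : mxform P w x = 0 -> market_exposure psi psif w x = 0.
Proof. by move=> orth; rewrite /market_exposure orth expr0n mulr0 mul0r. Qed.

End ImpactQuadraticForm.

Lemma Upsilon_decomp (R : realType) (N T : nat) (psi : 'rV[R]_N) (psif : R)
    (w : 'cV[R]_N) (theta : R) (alpha beta : 'I_T -> R) (x : 'cV[R]_N) :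
  (forall i, 0 < psi 0 i) -> 0 <= psif ->
  (forall t, 0 < alpha t) -> (forall t, 0 < beta t) ->
  \sum_(t < T) alpha t = 1 -> \sum_(t < T) beta t = 1 -> x != 0 ->
  Upsilon psi psif w theta alpha beta x = Ups_orth alpha beta theta +
    market_exposure psi psif w x * Delta alpha beta (eta1 psi psif w) theta.
Proof.
move=> psi_gt0 psif_ge0 alpha_gt0 beta_gt0 alpha_sum1 beta_sum1 x_neq0.
rewrite /Upsilon; under eq_bigr do rewrite qinv_impact ?(ltW (beta_gt0 _)) //.
rewrite qinv_impact ?ler01 // !mul1r divr1 separable_cost_ratio ?eta1_ge0 //.
exact: market_term_lt.
Qed.

Lemma extrema_of_affine (R : realType) (N : nat) (f g : 'cV[R]_N -> R) (c m D : R)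
    (x1 x0 : 'cV[R]_N) :
  (forall x, x != 0 -> f x = c + g x * D) -> (forall x, x != 0 -> 0 <= g x <= m) ->
  x1 != 0 -> g x1 = m -> x0 != 0 -> g x0 = 0 ->
  (0 <= D -> is_max_nz f (c + m * D) /\ is_min_nz f c) /\
  (D <= 0 -> is_max_nz f c /\ is_min_nz f (c + m * D)).
Proof.
move=> fE g_bounds x1_neq0 gx1 x0_neq0 gx0.
have fx1 : f x1 = c + m * D by rewrite fE // gx1.
have fx0 : f x0 = c by rewrite fE // gx0 mul0r addr0.
split=> D_sgn; split; split; try by [exists x1 | exists x0].
all: by move=> x x_neq0; rewrite fE //; have /andP[? ?] := g_bounds x x_neq0; nra.
Qed.

Theorem mainTheorem8 (R : realType) (N T : nat) (psi : 'rV[R]_N) (psif : R)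
  (w : 'cV[R]_N) (theta : R) (alpha beta : 'I_T -> R) :
  (2 <= N)%N ->
  (forall i, 0 < psi 0 i) -> 0 < psif -> w != 0 ->
  0 <= theta <= 1 ->
  (forall t, 0 < alpha t) -> (forall t, 0 < beta t) ->
  \sum_(t < T) alpha t = 1 -> \sum_(t < T) beta t = 1 ->
  let Ups := Upsilon psi psif w theta alpha beta in
  let eta := eta1 psi psif w in
  let D := Delta alpha beta eta theta in
  let Umkt := Ups_market alpha beta eta theta in
  let Uorth := Ups_orth alpha beta theta in
  [/\ Ups w = Umkt,
      (forall wp : 'cV[R]_N, wp != 0 ->
         (w^T *m invmx (diag_mx psi) *m wp) 0 0 = 0 -> Ups wp = Uorth),
      (0 <= D -> is_max_nz Ups Umkt /\ is_min_nz Ups Uorth) /\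
      (D <= 0 -> is_max_nz Ups Uorth /\ is_min_nz Ups Umkt),
      (exists2 ths : R, 0 <= ths <= 1 &
         forall th : R, 0 <= th <= 1 ->
           (th <= ths -> 0 <= Delta alpha beta eta th) /\
           (ths <= th -> Delta alpha beta eta th <= 0))
    & (theta < 1 ->
         (exists2 es : R, theta / (1 - theta) <= es &
            forall e : R, 0 <= e ->
              (e <= es -> Delta alpha beta e theta <= 0) /\
              (es <= e -> 0 <= Delta alpha beta e theta))
         \/
         (forall e : R, 0 <= e -> Delta alpha beta e theta <= 0))].
Proof.
move=> N_ge2 psi_gt0 psif_gt0 w_neq0 /andP[theta_ge0 theta_le1] alpha_gt0 beta_gt0
  alpha_sum1 beta_sum1 Ups eta D Umkt Uorth.
have psif_ge0 := ltW psif_gt0.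
have UpsE := Upsilon_decomp w theta psi_gt0 psif_ge0 alpha_gt0 beta_gt0 alpha_sum1 beta_sum1.
have exposure_self := market_exposure_self psif psi_gt0 w_neq0.
have exposure_orth := @market_exposure_orth _ _ psi psif w.
have [wp wp_neq0 wp_ker] := nonzero_cV_in_kernel (w^T *m invmx (diag_mx psi)) N_ge2.
have wp_orth : mxform (invmx (diag_mx psi)) w wp = 0 by rewrite /mxform wp_ker mxE.
split.
- by rewrite /Ups UpsE // exposure_self.
- by move=> x x_neq0 x_orth; rewrite /Ups UpsE // exposure_orth // mul0r addr0.
- exact: extrema_of_affine UpsE (market_exposure_bounds w psi_gt0 psif_ge0)
    w_neq0 exposure_self wp_neq0 (exposure_orth _ wp_orth).
- exact: Delta_theta_threshold (eta1_ge0 w psi_gt0 psif_ge0).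
- by move=> theta_lt1; exact: Delta_eta_threshold.
Qed.
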